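(* Let $N\ge2$, $d\ge1$, and let $x(t)$ be a (Carathéodory) solution of $$\dot x_i(t)=\frac{\lambda_i(x)}{N}\sum_{j=1}^N M_{ij}(t)\,\phi_{ij}(x_i,x_j)\,(x_j(t)-x_i(t)),\qquad i=1,\dots,N,$$ with $x_i\in\mathbb{R}^d$, where all $M_{ij}:[0,+\infty)\to[0,1]$ are Lebesgue measurable and $\lambda_i:\mathbb{R}^{Nd}\to\mathbb{R}^+$, $\phi_{ij}:\mathbb{R}^d\times\mathbb{R}^d\to\mathbb{R}^+$ are Lipschitz continuous and strictly positive. Fix $T,\mu>0$ and let $G(t)$ be the $(T,\mu)$-connectivity graph associated to the $M_{ij}$. Define $$\underline m:=\min\{\lambda_i(y)\phi_{ij}(y_i,y_j):\ i,j,\ y\in\mathbb{R}^{Nd},\ |y_k|\le\max_l|x_l(0)|\ \forall k\},$$ $$\overline m:=\max\{\lambda_i(y)\phi_{ij}(y_i,y_j):\ i,j,\ y\in\mathbb{R}^{Nd},\ |y_k|\le\max_l|x_l(0)|\ \forall k\}.$$ Then there exist Lebesgue integrable functions $\widetilde M_{ij}:[0,+\infty)\to[0,\overline m]$ such that $x(t)$ solves the linear system $$\dot x_i=\frac1N\sum_{j=1}^N\widetilde M_{ij}(t)(x_j-x_i),\qquad i=1,\dots,N,$$ and, for every $t\ge0$, the $(T,\underline m\mu)$-connectivity graph $\widetilde G(t)$ associated to the $\widetilde M_{ij}$ contains all arrows of $G(t)$.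
   Context: $|\cdot|$ is the Euclidean norm. Given $T,\mu>0$ and nonnegative measurable functions $M_{ij}$ on $[0,+\infty)$, the $(T,\mu)$-connectivity graph at time $t\ge0$ is the directed graph on nodes $\{1,\dots,N\}$ in which the arrow $i\to j$ exists iff $\frac1T\int_t^{t+T}M_{ij}(s)\,ds\ge\mu$. *)

From HB Require Import structures.
From mathcomp Require Import all_boot all_order all_algebra.
From mathcomp Require Import all_classical all_reals all_analysis.
Set Implicit Arguments. Unset Strict Implicit. Unset Printing Implicit Defensive.
Import Order.TTheory GRing.Theory Num.Theory.
Import numFieldNormedType.Exports.
Local Open Scope classical_set_scope.
Local Open Scope ring_scope.

Definition state (R : realType) (N d : nat) := 'I_N -> 'rV[R]_d.

Definition eucl (R : realType) (d : nat) (v : 'rV[R]_d) : R :=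
  Num.sqrt (\sum_(k < d) v 0 k ^+ 2).

Definition state_dist (R : realType) (N d : nat) (y z : state R N d) : R :=
  Num.sqrt (\sum_(i < N) \sum_(k < d) (y i 0 k - z i 0 k) ^+ 2).

Definition pair_dist (R : realType) (d : nat) (a b a' b' : 'rV[R]_d) : R :=
  Num.sqrt (\sum_(k < d) (a 0 k - a' 0 k) ^+ 2 + \sum_(k < d) (b 0 k - b' 0 k) ^+ 2).

Definition caratheodory_solution (R : realType) (N d : nat)
  (F : R -> state R N d -> state R N d) (x : R -> state R N d) : Prop :=
  forall t : R, 0 <= t -> forall (i : 'I_N) (k : 'I_d),
    (lebesgue_measure).-integrable `[0, t] (fun s => ((F s (x s) i) 0 k)%:E) /\
    x t i 0 k = x 0 i 0 k +
      Rintegral lebesgue_measure `[0, t] (fun s => (F s (x s) i) 0 k).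

Definition conn_arrow (R : realType) (N : nat) (T mu : R)
  (M : 'I_N -> 'I_N -> R -> R) (t : R) (i j : 'I_N) : Prop :=
  mu <= T^-1 * Rintegral lebesgue_measure `[t, t + T] (M i j).

Definition interaction_values (R : realType) (N d : nat)
  (lam : 'I_N -> state R N d -> R)
  (phi : 'I_N -> 'I_N -> 'rV[R]_d -> 'rV[R]_d -> R) (r : R) : set R :=
  [set v | exists i j (y : state R N d),
      (forall k, eucl (y k) <= r) /\ v = lam i y * phi i j (y i) (y j)].

Definition max_init_norm (R : realType) (N d : nat) (x0 : state R N d) : R :=
  \big[Num.max/0]_(l < N) eucl (x0 l).

From HB Require Import structures.
From mathcomp Require Import all_boot all_order all_algebra.
From mathcomp Require Import all_classical all_reals all_analysis.
From mathcomp Require Import lra ring measurable_realfun.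
Import Order.TTheory GRing.Theory Num.Theory.
Import numFieldNormedType.Exports.

Set Implicit Arguments.
Unset Strict Implicit.
Unset Printing Implicit Defensive.

Local Open Scope classical_set_scope.
Local Open Scope ring_scope.

(* The weights are M~_ij(t) := M_ij(t) lambda_i(x(t)) phi_ij(x_i(t), x_j(t)), for
   which x solves the linear system by construction.  Everything else rests on the
   trajectory staying in the ball of radius r = max_l |x_l(0)|: along it,
   lambda_i phi_ij lies between m_lo and m_hi, which bounds M~ and compares the
   integrals defining the two connectivity graphs.  The ball is invariant because
   every scalar projection <v, x_j> solves a consensus system with nonnegative
   bounded weights and therefore obeys a maximum principle.  Measurability of M~
   comes from x being locally Lipschitz, since lambda and phi are Lipschitz. *)

Section RealFacts.
Context {R : realType}.

Lemma uniform_bound (I : finType) (P : I -> R -> Prop) :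
  (forall i K K', K <= K' -> P i K -> P i K') ->
  (forall i, exists K, P i K) -> exists2 K, 0 <= K & forall i, P i K.
Proof.
move=> mono /choice[Kf hKf]; exists (\big[Num.max/0]_i Kf i).
  exact: bigmax_ge_id.
by move=> i; apply: mono (hKf i); exact: le_bigmax.
Qed.

Lemma sum_sqr_le (m : nat) (t : 'I_m -> R) (c : R) :
  (forall k, `|t k| <= c) -> \sum_(k < m) t k ^+ 2 <= m%:R * c ^+ 2.
Proof.
move=> h; apply: (@le_trans _ _ (\sum_(k < m) c ^+ 2)).
  apply: ler_sum => k _; rewrite -real_normK ?num_real //.
  by rewrite lerXn2r ?nnegrE ?(le_trans _ (h k)).
by rewrite sumr_const card_ord mulr_natl.
Qed.

Lemma sqrt_le_mul (S c : R) (n : nat) :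
  0 <= c -> S <= n%:R * c ^+ 2 -> Num.sqrt S <= Num.sqrt n%:R * c.
Proof.
move=> c0 h; apply: le_trans (ler_wsqrtr h) _.
by rewrite sqrtrM ?ler0n // sqrtr_sqr ger0_norm.
Qed.

Lemma sum_mul_le_half_sqr (m : nat) (v w : 'I_m -> R) :
  \sum_(k < m) v k * w k <= (\sum_(k < m) v k ^+ 2 + \sum_(k < m) w k ^+ 2) / 2.
Proof.
rewrite -big_split mulr_suml /=; apply: ler_sum => k _.
have := sqr_ge0 (v k - w k); lra.
Qed.

Lemma dist_max0_le (u w : R) : `|Num.max u 0 - Num.max w 0| <= `|u - w|.
Proof.
have := ler_norm (u - w); have := ler_norm (w - u); rewrite distrC.
rewrite ler_norml /Num.max /Order.max.
by case: (ltP u 0); case: (ltP w 0) => *; apply/andP; split; lra.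
Qed.

Lemma consensus_sum_norm_le (N : nat) (a z : 'I_N -> R) (K B : R) i :
  (forall j, 0 <= a j <= K) -> (forall j, `|z j| <= B) ->
  `|\sum_(j < N) a j * (z j - z i)| <= (K * (B + B)) *+ N.
Proof.
move=> ha hz; apply: le_trans (ler_norm_sum _ _ _) _.
rewrite -[N in _ *+ N]card_ord -sumr_const; apply: ler_sum => j _.
have /andP[a0 aK] := ha j; rewrite normrM ger0_norm //.
apply: ler_pM => //; apply: le_trans (ler_normB _ _) _.
by apply: lerD.
Qed.

Lemma consensus_sum_le_excess (N : nat) (a z : 'I_N -> R) (K Y0 c : R) i :
  (forall j, 0 <= a j <= K) -> Y0 < z i -> (forall j, z j - Y0 <= c) ->
  \sum_(j < N) a j * (z j - z i) <= (K * c) *+ N.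
Proof.
move=> ha zi hc; have c0 : 0 <= c by have := hc i; lra.
rewrite -[N in _ *+ N]card_ord -sumr_const; apply: ler_sum => j _.
have /andP[a0 aK] := ha j; apply: le_trans (_ : a j * c <= _).
  by apply: ler_wpM2l => //; have := hc j; lra.
exact: ler_wpM2r.
Qed.

Lemma mul_le_norm_mul (L D S : R) : 0 <= D -> D <= S -> L * D <= `|L| * S.
Proof.
move=> D0 DS; apply: le_trans (ler_wpM2r D0 (ler_norm L)) _.
exact: ler_wpM2l.
Qed.

Lemma le_lipschitz_bound (u v L D S : R) :
  `|u - v| <= L * D -> 0 <= D -> D <= S -> u <= `|v| + `|L| * S.
Proof.
move=> uv D0 DS; have := mul_le_norm_mul L D0 DS.
have := ler_norm (u - v); have := ler_norm v; lra.
Qed.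

End RealFacts.

Section LebesgueIntegrals.
Context {R : realType}.
Local Notation mu := (@lebesgue_measure R).

Lemma integrable_bounded_itv (f : R -> R) (ba bb : bool) (a b C : R) :
  let D := [set` Interval (BSide ba a) (BSide bb b)] in
  measurable_fun D f -> (forall s, D s -> `|f s| <= C) ->
  mu.-integrable D (EFin \o f).
Proof.
move=> D mf hC.
have Dfin : (mu D < +oo)%E.
  by rewrite lebesgue_measure_itv; case: ifP => _; rewrite ?ltry.
apply: measurable_bounded_integrable => //.
- exact: measurable_itv.
- rewrite /bounded_near; near=> K => s Ds /=.
  apply: le_trans (hC s Ds) _; near: K; apply: nbhs_pinfty_ge; exact: num_real.
Unshelve. all: end_near. Qed.

Lemma Rintegral_itv_le_cst (f : R -> R) (a b C : R) : a <= b ->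
  mu.-integrable `]a, b] (EFin \o f) -> (forall s, a < s <= b -> f s <= C) ->
  \int[mu]_(s in `]a, b]) f s <= C * (b - a).
Proof.
move=> ab intf hf; apply: le_trans (_ : \int[mu]_(s in `]a, b]) C <= _).
  have intC : mu.-integrable `]a, b] (EFin \o fun=> C).
    by apply: (@integrable_bounded_itv _ _ _ a b `|C|) => //; exact: measurable_cst.
  by apply: le_Rintegral => // s; rewrite /= in_itv; exact: hf.
rewrite Rintegral_cst //= lebesgue_measure_itv /= lte_fin.
by case: ltP => [//|ba]; rewrite (@le_anti _ _ b a) ?ba ?subrr ?mulr0.
Qed.

Lemma integrable_sumr (D : set R) (I : Type) (s : seq I) (f : I -> R -> R) :
  measurable D -> (forall k, mu.-integrable D (EFin \o f k)) ->
  mu.-integrable D (EFin \o (fun x => \sum_(k <- s) f k x)).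
Proof.
move=> mD intf.
have := @integrable_sum _ _ _ mu _ mD _ s xpredT (fun k => EFin \o f k) (fun k _ => intf k).
by apply: eq_integrable => // x _; rewrite /= sumEFin.
Qed.

Lemma Rintegral_sumr (D : set R) (I : Type) (s : seq I) (f : I -> R -> R) :
  measurable D -> (forall k, mu.-integrable D (EFin \o f k)) ->
  \int[mu]_(x in D) (\sum_(k <- s) f k x) = \sum_(k <- s) \int[mu]_(x in D) f k x.
Proof.
move=> mD intf; elim: s => [|k s IHs].
  by under eq_Rintegral do rewrite big_nil; rewrite Rintegral_cst // mul0r big_nil.
under eq_Rintegral do rewrite big_cons.
by rewrite RintegralD ?IHs ?big_cons //; exact: integrable_sumr.
Qed.

Lemma integrable_window (f : R -> R) (t T C : R) : 0 <= t ->
  measurable_fun `[0 : R, +oo[ f -> (forall s, 0 <= s -> `|f s| <= C) ->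
  mu.-integrable `[t, t + T] (EFin \o f).
Proof.
move=> t0 mf fC; have sub : `[t, t + T] `<=` `[0 : R, +oo[.
  by move=> s /=; rewrite !in_itv /= andbT => /andP[ts _]; exact: le_trans ts.
apply: (@integrable_bounded_itv _ _ _ _ _ C); first exact: measurable_funS mf.
by move=> s /sub; rewrite /= in_itv /= andbT; exact: fC.
Qed.

End LebesgueIntegrals.

Definition lipschitz_upto {R : realType} (C t : R) (f : R -> R) :=
  forall u v, 0 <= u -> u <= v -> v <= t -> `|f v - f u| <= C * (v - u).

Section IntegralEquation.
Context {R : realType}.
Local Notation mu := (@lebesgue_measure R).
Variables (y g : R -> R) (tf : R).
Hypothesis g_int : mu.-integrable `[0, tf] (EFin \o g).
Hypothesis y_eq : forall t, 0 <= t -> t <= tf ->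
  y t = y 0 + \int[mu]_(s in `[0, t]) g s.

Lemma integral_equation_increment u v : 0 <= u -> u <= v -> v <= tf ->
  y v - y u = \int[mu]_(s in `]u, v]) g s.
Proof.
move=> u0 uv vtf; have v0 := le_trans u0 uv.
rewrite (y_eq v0 vtf) (y_eq u0 (le_trans uv vtf)) opprD addrACA subrr add0r.
apply: (@Rintegral_itvB _ g (BLeft 0) (BRight v) u); rewrite ?bnd_simp //.
by apply: integrableS g_int => //; apply: subset_itvl; rewrite bnd_simp.
Qed.

Lemma integral_equation_increment_le u v C :
  0 <= u -> u <= v -> v <= tf -> (forall w, u < w <= v -> g w <= C) ->
  y v - y u <= C * (v - u).
Proof.
move=> u0 uv vtf hC; rewrite integral_equation_increment //.
apply: Rintegral_itv_le_cst => //; apply: integrableS g_int => //.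
by apply: subset_itvScc; rewrite bnd_simp.
Qed.

Lemma integral_equation_lipschitz C :
  (forall w, 0 <= w -> w <= tf -> `|g w| <= C) -> lipschitz_upto C tf y.
Proof.
move=> hC u v u0 uv vtf; rewrite integral_equation_increment //.
have intg : mu.-integrable `]u, v] (EFin \o g).
  by apply: integrableS g_int => //; apply: subset_itvScc; rewrite bnd_simp.
apply: le_trans (le_normr_Rintegral _ intg) _ => //.
apply: Rintegral_itv_le_cst => //; first exact: integrable_norm.
by move=> w /andP[uw wv]; apply: hC; lra.
Qed.

End IntegralEquation.

Lemma integral_equation_lincomb {R : realType} (m : nat) (c : 'I_m -> R)
    (z g : 'I_m -> R -> R) (tf : R) :
  (forall k, (@lebesgue_measure R).-integrable `[0, tf] (EFin \o g k)) ->
  (forall k t, 0 <= t -> t <= tf ->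
     z k t = z k 0 + \int[lebesgue_measure]_(s in `[0, t]) g k s) ->
  (@lebesgue_measure R).-integrable `[0, tf]
     (EFin \o fun s => \sum_(k < m) c k * g k s) /\
  forall t, 0 <= t -> t <= tf ->
    \sum_(k < m) c k * z k t = \sum_(k < m) c k * z k 0 +
      \int[lebesgue_measure]_(s in `[0, t]) \sum_(k < m) c k * g k s.
Proof.
move=> g_int z_eq.
have g_int_t t k : t <= tf ->
    (@lebesgue_measure R).-integrable `[0, t] (EFin \o g k).
  by move=> ttf; apply: integrableS (g_int k) => //; apply: subset_itvl; rewrite bnd_simp.
have cg_int t k : t <= tf ->
    (@lebesgue_measure R).-integrable `[0, t] (EFin \o fun s => c k * g k s).
  move=> ttf; have := integrableZl _ (c k) (g_int_t t k ttf) => /(_ (measurable_itv _)).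
  by apply: eq_integrable.
split; first by apply: integrable_sumr => // k; exact: cg_int.
move=> t t0 ttf; rewrite Rintegral_sumr //; last by move=> k; exact: cg_int.
rewrite -big_split /=; apply: eq_bigr => k _.
by rewrite z_eq // RintegralZl ?mulrDr //; exact: g_int_t.
Qed.

Section LipschitzUpto.
Context {R : realType}.

Lemma last_crossing (f : R -> R) (a b Y0 C t : R) :
  0 <= a -> a <= b -> b <= t -> 0 <= C -> lipschitz_upto C t f -> f a <= Y0 ->
  exists2 s, [/\ a <= s, s <= b & f s <= Y0] & forall w, s < w <= b -> Y0 < f w.
Proof.
move=> a0 ab bt C0 flip fa.
pose S := [set w | a <= w <= b /\ f w <= Y0].
have Sa : S a by split; rewrite ?lexx ?ab.
have S_ub : has_ubound S by exists b => w [/andP[]].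
have as_ : a <= sup S := ub_le_sup S_ub Sa.
have sb : sup S <= b by apply: ge_sup; [exists a | move=> w [/andP[]]].
exists (sup S); last first.
  move=> w /andP[sw wb]; rewrite ltNge; apply/negP => fw.
  have Sw : S w by split => //; rewrite (le_trans as_ (ltW sw)) wb.
  by have := ub_le_sup S_ub Sw; lra.
split => //; apply/ler_addgt0Pr => e e0.
have e'0 : 0 < e / (C + 1) by rewrite divr_gt0 //; lra.
have [w Sw hw] := sup_adherent e'0 (conj (ex_intro _ _ Sa) S_ub).
have ws : w <= sup S := ub_le_sup S_ub Sw.
case: Sw => /andP[aw wb] fw.
have := flip w (sup S) (le_trans a0 aw) ws (le_trans sb bt).
rewrite ler_norml => /andP[_ hf].
have : C * (sup S - w) <= C * (e / (C + 1)) by apply: ler_wpM2l => //; lra.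
have : C * (e / (C + 1)) <= e.
  by rewrite mulrA ler_pdivrMr; [nra | lra].
lra.
Qed.

Lemma continuous_locally_lipschitz (f : R -> R) :
  (forall s0, exists C, forall u, `|u - s0| < 1 -> `|f u - f s0| <= C * `|u - s0|) ->
  continuous f.
Proof.
move=> h s0; have [C hC] := h s0; apply/cvgrPdist_le => e e0.
pose dl := Num.min 1 (e / (`|C| + 1)).
have dl0 : 0 < dl by rewrite lt_min ltr01 divr_gt0 // ltr_pwDr.
apply/nbhs_ballP; exists dl => //= u; rewrite /ball_ /= distrC => hu.
have [hu1 hue] : `|u - s0| < 1 /\ `|u - s0| < e / (`|C| + 1).
  by move: hu; rewrite lt_min => /andP[].
rewrite distrC; apply: le_trans (hC u hu1) _.
apply: le_trans (_ : `|C| * `|u - s0| <= _); first by rewrite ler_wpM2r ?ler_norm.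
apply: le_trans (_ : `|C| * (e / (`|C| + 1)) <= _); first exact/ler_wpM2l/ltW.
by rewrite mulrA ler_pdivrMr ?ltr_pwDr //; nra.
Qed.

Lemma lipschitz_upto_dist (C t : R) (f : R -> R) : lipschitz_upto C t f ->
  forall u v, 0 <= u -> 0 <= v -> u <= t -> v <= t -> `|f u - f v| <= C * `|u - v|.
Proof.
move=> fC u v u0 v0 ut vt; have [uv|vu] := leP u v.
  by rewrite distrC [`|u - v|]distrC [`|v - u|]ger0_norm ?subr_ge0 //; exact: fC.
rewrite [`|u - v|]ger0_norm; last by rewrite subr_ge0 ltW.
by apply: fC => //; exact: ltW.
Qed.

Lemma measurable_fun_lipschitz_upto (f : R -> R) :
  (forall t, 0 <= t -> exists C, lipschitz_upto C t f) ->
  measurable_fun `[0 : R, +oo[ f.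
Proof.
(* f (max s 0) extends f continuously to the whole line. *)
move=> hf; pose g s := f (Num.max s 0).
have max_ge0 (w : R) : 0 <= Num.max w 0 by rewrite le_max lexx orbT.
have g_cont : continuous g.
  apply: continuous_locally_lipschitz => s0.
  have [C fC] := hf (Num.max s0 0 + 1) (addr_ge0 (max_ge0 s0) ler01).
  exists `|C| => u hu; have du := dist_max0_le u s0.
  apply: le_trans (mul_le_norm_mul C (normr_ge0 _) du).
  rewrite /g; apply: (lipschitz_upto_dist fC); rewrite ?max_ge0 //; last by lra.
  by have := ler_norm (Num.max u 0 - Num.max s0 0); lra.
apply: (eq_measurable_fun g); last exact: measurable_funS (continuous_measurable_fun g_cont).
by move=> s; rewrite inE /= in_itv /= andbT => s0; rewrite /g max_l.
Qed.

End LipschitzUpto.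

Section ConsensusMaximumPrinciple.
Context {R : realType} {N : nat}.
Local Notation mu := (@lebesgue_measure R).
Variables (y : 'I_N -> R -> R) (a : 'I_N -> 'I_N -> R -> R) (Y0 K B tf : R).
Let g i s := \sum_(j < N) a i j s * (y j s - y i s).
Hypothesis K_ge0 : 0 <= K.
Hypothesis a_bound : forall i j s, 0 <= s -> s <= tf -> 0 <= a i j s <= K.
Hypothesis y_bound : forall i s, 0 <= s -> s <= tf -> `|y i s| <= B.
Hypothesis g_int : forall i, mu.-integrable `[0, tf] (EFin \o g i).
Hypothesis y_eq : forall i t, 0 <= t -> t <= tf ->
  y i t = y i 0 + \int[mu]_(s in `[0, t]) g i s.
Hypothesis y0_le : forall i, y i 0 <= Y0.

Let below tau := forall i s, 0 <= s -> s <= tf -> s <= tau -> y i s <= Y0.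
Let delta := (2 * (K *+ N + 1))^-1.

Let delta_gt0 : 0 < delta.
Proof. by rewrite invr_gt0; have := mulrn_wge0 N K_ge0; lra. Qed.

Lemma consensus_lipschitz i : lipschitz_upto ((K * (B + B)) *+ N) tf (y i).
Proof.
apply: (integral_equation_lipschitz (g_int i) (y_eq i)) => s s0 stf.
by apply: consensus_sum_norm_le => j; [exact: a_bound | exact: y_bound].
Qed.

(* After the last time s <= u at which y_j is below Y0, the rate of y_j is at
   most K N c, so over a window of length delta the excess grows by at most
   K N c delta <= c / 2. *)
Lemma consensus_excess_halves tau c : 0 <= tau -> below tau -> 0 <= c ->
  (forall j s, 0 <= s -> s <= tf -> s <= tau + delta -> y j s - Y0 <= c) ->
  forall j s, 0 <= s -> s <= tf -> s <= tau + delta -> y j s - Y0 <= c / 2.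
Proof.
move=> tau0 btau c0 hc j u u0 utf ud.
have [|ygt] := leP (y j u) Y0; first by lra.
have tu : tau < u.
  by rewrite ltNge; apply/negP => ut; have := btau j u u0 utf ut; lra.
have B0 : 0 <= B := le_trans (normr_ge0 _) (y_bound j u0 utf).
have C0 : 0 <= (K * (B + B)) *+ N by rewrite mulrn_wge0 // mulr_ge0 ?addr_ge0.
have [s [ts su ys] hs] := last_crossing tau0 (ltW tu) utf C0 (consensus_lipschitz j)
  (btau j tau tau0 (le_trans (ltW tu) utf) (lexx tau)).
have s0 := le_trans tau0 ts.
have incr : y j u - y j s <= (K * c) *+ N * (u - s).
  apply: (integral_equation_increment_le (g_int j) (y_eq j)) => // w /andP[sw wu].
  have w0 : 0 <= w by lra.
  apply: (consensus_sum_le_excess (a := a j ^~ w)) => [l||l].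
  - by apply: a_bound => //; lra.
  - by apply: hs; rewrite sw wu.
  - by apply: hc => //; lra.
have Kc0 : 0 <= (K * c) *+ N by rewrite mulrn_wge0 // mulr_ge0.
have KNd : (K * c) *+ N * delta <= c / 2.
  have KN0 : 0 <= K *+ N := mulrn_wge0 N K_ge0.
  rewrite -mulrnAl /delta ler_pdivrMr; last by lra.
  have -> : c / 2 * (2 * (K *+ N + 1)) = K *+ N * c + c by field.
  lra.
have usd : u - s <= delta by lra.
have := ler_wpM2l Kc0 usd; lra.
Qed.

Lemma consensus_below_step tau : 0 <= tau -> below tau -> below (tau + delta).
Proof.
move=> tau0 btau.
pose S := [set e | e = 0 \/ exists j s,
  [/\ 0 <= s, s <= tf, s <= tau + delta & e = y j s - Y0]].
have S_ub : has_ubound S.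
  exists (`|B| + `|Y0|) => _ [->|[j [s [s0 stf _ ->]]]]; first exact: addr_ge0.
  have := y_bound j s0 stf; have := ler_norm B; have := ler_norm (y j s).
  have := ler_norm (- Y0); rewrite normrN; lra.
have S0 : S 0 by left.
have c0 : 0 <= sup S := ub_le_sup S_ub S0.
have halves : forall e, S e -> e <= sup S / 2.
  move=> _ [->|[j [s [s0 stf sd ->]]]]; first by lra.
  apply: (consensus_excess_halves tau0 btau c0) => // l w w0 wtf wd.
  by apply: (ub_le_sup S_ub); right; exists l, w.
have cle : sup S <= sup S / 2 by apply: ge_sup; [exists 0 | exact: halves].
move=> i s s0 stf sd.
have : y i s - Y0 <= sup S by apply: (ub_le_sup S_ub); right; exists i, s.
lra.
Qed.

Theorem consensus_max_principle i t : 0 <= t -> t <= tf -> y i t <= Y0.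
Proof.
have below_n (n : nat) : below (n%:R * delta).
  elim: n => [|n IHn].
    move=> j s s0 _; rewrite mul0r => s_le0.
    by rewrite (@le_anti _ _ s 0) ?s0 ?s_le0.
  rewrite -addn1 natrD mulrDl mul1r.
  by apply: consensus_below_step => //; rewrite mulr_ge0 // ltW.
move=> t0 ttf; have [n tn] : exists n : nat, t <= n%:R * delta.
  exists (Num.Def.archi_bound (t / delta)).
  rewrite -ler_pdivrMr //; apply/ltW/archi_boundP.
  by rewrite divr_ge0 // ltW.
exact: below_n n i t t0 ttf tn.
Qed.

End ConsensusMaximumPrinciple.

Section StateFacts.
Context {R : realType}.

Lemma coord_le_eucl (d : nat) (v : 'rV[R]_d) k : `|v 0 k| <= eucl v.
Proof.
rewrite /eucl -sqrtr_sqr; apply: ler_wsqrtr.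
by rewrite (bigD1 k) //= lerDl sumr_ge0 // => l _; exact: sqr_ge0.
Qed.

Lemma state_dist_le (N d : nat) (y z : state R N d) c : 0 <= c ->
  (forall j k, `|y j 0 k - z j 0 k| <= c) -> state_dist y z <= Num.sqrt (N * d)%:R * c.
Proof.
move=> c0 hc; apply: sqrt_le_mul => //.
apply: (@le_trans _ _ (\sum_(j < N) d%:R * c ^+ 2)).
  by apply: ler_sum => j _; exact: sum_sqr_le.
by rewrite sumr_const card_ord -[_ *+ N]mulr_natl mulrA -natrM.
Qed.

Lemma pair_dist_le (d : nat) (a b a' b' : 'rV[R]_d) c : 0 <= c ->
  (forall k, `|a 0 k - a' 0 k| <= c) -> (forall k, `|b 0 k - b' 0 k| <= c) ->
  pair_dist a b a' b' <= Num.sqrt (d + d)%:R * c.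
Proof.
move=> c0 ha hb; apply: sqrt_le_mul => //.
by rewrite natrD mulrDl; apply: lerD; exact: sum_sqr_le.
Qed.

Lemma row_lincomb_coord (n d : nat) (c : R) (b : 'I_n -> R) (y : 'I_n -> 'rV[R]_d) i k :
  (c *: \sum_(j < n) b j *: (y j - y i)) 0 k = c * \sum_(j < n) b j * (y j 0 k - y i 0 k).
Proof. by rewrite mxE summxE; congr (_ * _); apply: eq_bigr => j _; rewrite !mxE. Qed.

Lemma caratheodory_solution_eq (N d : nat) (F G : R -> state R N d -> state R N d)
    (x : R -> state R N d) :
  (forall s i k, F s (x s) i 0 k = G s (x s) i 0 k) ->
  caratheodory_solution F x -> caratheodory_solution G x.
Proof.
move=> FG solF t t0 i k; have [intF xF] := solF t t0 i k; split.
  by apply: eq_integrable intF => // s _; rewrite /= FG.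
by rewrite xF; congr (_ + _); apply: eq_Rintegral => s _; rewrite FG.
Qed.

End StateFacts.

Section Model.
Context {R : realType} {N d : nat}.
Local Notation mu := (@lebesgue_measure R).
Variables (M : 'I_N -> 'I_N -> R -> R) (lam : 'I_N -> state R N d -> R)
  (phi : 'I_N -> 'I_N -> 'rV[R]_d -> 'rV[R]_d -> R) (x : R -> state R N d).
Hypothesis M_range : forall i j t, 0 <= t -> 0 <= M i j t <= 1.
Hypothesis lam_lip : forall i, exists L : R, forall y z : state R N d,
  `|lam i y - lam i z| <= L * state_dist y z.
Hypothesis lam_pos : forall i y, 0 < lam i y.
Hypothesis phi_lip : forall i j, exists L : R, forall a b a' b' : 'rV[R]_d,
  `|phi i j a b - phi i j a' b'| <= L * pair_dist a b a' b'.
Hypothesis phi_pos : forall i j a b, 0 < phi i j a b.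
Hypothesis x_sol : caratheodory_solution
  (fun s (y : state R N d) i =>
     (lam i y / N%:R) *: \sum_(j < N) (M i j s * phi i j (y i) (y j)) *: (y j - y i)) x.

Let a i j s := lam i (x s) / N%:R * (M i j s * phi i j (x s i) (x s j)).
Let rate i k s := \sum_(j < N) a i j s * (x s j 0 k - x s i 0 k).

Lemma interaction_bounded c : 0 <= c -> exists2 K, 0 <= K &
  forall i j (y : state R N d), (forall l k, `|y l 0 k| <= c) ->
    lam i y * phi i j (y i) (y j) <= K.
Proof.
move=> c0; pose P (p : 'I_N * 'I_N) K := forall y : state R N d,
  (forall l k, `|y l 0 k| <= c) -> lam p.1 y * phi p.1 p.2 (y p.1) (y p.2) <= K.
suff [K K0 hK] : exists2 K, 0 <= K & forall p, P p K.
  by exists K => // i j y hy; exact: (hK (i, j)).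
apply: uniform_bound => [p K K' KK' hK y hy|[i j]]; first exact: le_trans (hK y hy) KK'.
have [Ll hLl] := lam_lip i; have [Lp hLp] := phi_lip i j.
pose y0 : state R N d := fun=> 0.
exists ((`|lam i y0| + `|Ll| * (Num.sqrt (N * d)%:R * c)) *
        (`|phi i j 0 0| + `|Lp| * (Num.sqrt (d + d)%:R * c))) => y hy /=.
apply: ler_pM; [exact/ltW/lam_pos | exact/ltW/phi_pos | |].
  apply: le_lipschitz_bound (hLl y y0) (sqrtr_ge0 _) _.
  by apply: state_dist_le => // l k; rewrite mxE subr0.
apply: le_lipschitz_bound (hLp (y i) (y j) 0 0) (sqrtr_ge0 _) _.
by apply: pair_dist_le => // k; rewrite mxE subr0.
Qed.

Lemma interaction_values_ubound r : 0 <= r -> has_ubound (interaction_values lam phi r).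
Proof.
move=> r0; have [K _ hK] := interaction_bounded r0.
exists K => _ [i [j [y [yr ->]]]]; apply: hK => l k.
exact: le_trans (coord_le_eucl _ _) (yr l).
Qed.

Lemma solution_coord t i k : 0 <= t ->
  mu.-integrable `[0, t] (EFin \o rate i k) /\
  x t i 0 k = x 0 i 0 k + \int[mu]_(s in `[0, t]) rate i k s.
Proof.
have rateE s : ((lam i (x s) / N%:R) *:
    \sum_(j < N) (M i j s * phi i j (x s i) (x s j)) *: (x s j - x s i)) 0 k = rate i k s.
  by rewrite row_lincomb_coord mulr_sumr; apply: eq_bigr => j _; rewrite mulrA.
move=> t0; have [intF xF] := x_sol t0 i k; split.
  by apply: eq_integrable intF => // s _; rewrite /= rateE.
by rewrite xF; congr (_ + _); apply: eq_Rintegral => s _; rewrite rateE.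
Qed.

Lemma solution_bounded t : 0 <= t -> exists2 B, 0 <= B &
  forall s j k, 0 <= s -> s <= t -> `|x s j 0 k| <= B.
Proof.
move=> t0; pose P (p : 'I_N * 'I_d) B :=
  forall s, 0 <= s -> s <= t -> `|x s p.1 0 p.2| <= B.
suff [B B0 hB] : exists2 B, 0 <= B & forall p, P p B.
  by exists B => // s j k; exact: (hB (j, k)).
apply: uniform_bound => [p K K' KK' hK s s0 st|[j k]].
  exact: le_trans (hK s s0 st) KK'.
exists (`|x 0 j 0 k| + \int[mu]_(s in `[0, t]) `|rate j k s|) => s s0 st /=.
have [ints ->] := solution_coord j k s0; have [intt _] := solution_coord j k t0.
apply: le_trans (ler_normD _ _) _; rewrite lerD2l.
apply: le_trans (le_normr_Rintegral _ ints) _ => //.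
rewrite -subr_ge0 (@Rintegral_itvB _ _ (BLeft 0) (BRight t) s) ?bnd_simp //.
  by apply: Rintegral_ge0 => w _; exact: normr_ge0.
exact: integrable_norm.
Qed.

Lemma coefficient_bounded t : 0 <= t -> exists2 K, 0 <= K &
  forall i j s, 0 <= s -> s <= t -> 0 <= a i j s <= K.
Proof.
move=> t0; have [B B0 xB] := solution_bounded t0.
have [K K0 hK] := interaction_bounded B0.
exists (K / N%:R) => [|i j s s0 st]; first by rewrite divr_ge0.
have /andP[M0 M1] := M_range i j s0.
have lp := lam_pos i (x s); have pp := phi_pos i j (x s i) (x s j).
have := hK i j (x s) (fun l k => xB s l k s0 st).
have -> : a i j s = M i j s * (lam i (x s) * phi i j (x s i) (x s j)) / N%:R.
  by rewrite /a; ring.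
move=> le_K; have I0 := mulr_gt0 lp pp.
apply/andP; split; first by rewrite !mulr_ge0 ?invr_ge0 // ltW.
by apply: ler_wpM2r; [rewrite invr_ge0 | nra].
Qed.

Lemma solution_lipschitz t : 0 <= t -> exists2 C, 0 <= C &
  forall j k, lipschitz_upto C t (fun s => x s j 0 k).
Proof.
move=> t0; have [B B0 xB] := solution_bounded t0.
have [K K0 aK] := coefficient_bounded t0.
exists ((K * (B + B)) *+ N) => [|j k]; first by rewrite mulrn_wge0 ?mulr_ge0 ?addr_ge0.
have [intt _] := solution_coord j k t0.
apply: (integral_equation_lipschitz intt) => [s s0 st|s s0 st].
  by case: (solution_coord j k s0).
apply: consensus_sum_norm_le => l; first exact: aK.
exact: xB.
Qed.

Lemma solution_in_ball t i : 0 <= t -> eucl (x t i) <= max_init_norm (x 0).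
Proof.
move=> t0; set r := max_init_norm (x 0); set v := x t i.
have r0 : 0 <= r := bigmax_ge_id _ _ _ _.
have x0_le j : \sum_(k < d) x 0 j 0 k ^+ 2 <= r ^+ 2.
  rewrite -[X in X <= _]sqr_sqrtr ?sumr_ge0 // => [|k _]; last exact: sqr_ge0.
  by rewrite lerXn2r ?nnegrE ?sqrtr_ge0 //; exact: (le_bigmax 0 (fun l => eucl (x 0 l)) j).
(* Each projection y_j = <v, x_j> on v := x_i(t) solves a consensus system, and
   <v, x_j(0)> <= (|v|^2 + r^2) / 2; the maximum principle at time t then gives
   |v|^2 <= (|v|^2 + r^2) / 2. *)
pose V := \sum_(k < d) v 0 k ^+ 2.
pose y j s := \sum_(k < d) v 0 k * x s j 0 k.
have y_rate j s :
    \sum_(l < N) a j l s * (y l s - y j s) = \sum_(k < d) v 0 k * rate j k s.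
  under eq_bigr => l _ do rewrite /y -sumrB mulr_sumr.
  rewrite exchange_big; apply: eq_bigr => k _; rewrite mulr_sumr.
  by apply: eq_bigr => l _; ring.
have y_lin j := integral_equation_lincomb (z := fun k s => x s j 0 k) (g := rate j)
  (fun k => v 0 k) (fun k => (solution_coord j k t0).1)
  (fun k s s0 _ => (solution_coord j k s0).2).
have [B B0 xB] := solution_bounded t0.
have [K K0 aK] := coefficient_bounded t0.
have yV : y i t <= (V + r ^+ 2) / 2.
  apply: (@consensus_max_principle _ _ y a _ K (\sum_(k < d) `|v 0 k| * B) t K0 aK)
    => // [j s s0 st|j|j s s0 st|j].
  - apply: le_trans (ler_norm_sum _ _ _) _; apply: ler_sum => k _.
    by rewrite normrM ler_wpM2l ?xB.
  - by apply: eq_integrable (y_lin j).1 => // s _; rewrite /= y_rate.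
  - apply: etrans ((y_lin j).2 s s0 st) _; congr (_ + _).
    by apply: eq_Rintegral => w _; rewrite y_rate.
  - apply: le_trans (sum_mul_le_half_sqr (fun k => v 0 k) (fun k => x 0 j 0 k)) _.
    by have := x0_le j; rewrite -/V; lra.
have yiV : y i t = V by apply: eq_bigr => k _; rewrite expr2.
rewrite /eucl -/V -(ger0_norm r0) -sqrtr_sqr; apply: ler_wsqrtr; lra.
Qed.

Lemma interaction_measurable i j :
  measurable_fun `[0 : R, +oo[ (fun s => lam i (x s) * phi i j (x s i) (x s j)).
Proof.
have [Ll hLl] := lam_lip i; have [Lp hLp] := phi_lip i j.
apply: measurable_funM; apply: measurable_fun_lipschitz_upto => t t0;
  have [C C0 xC] := solution_lipschitz t0.
- exists (`|Ll| * (Num.sqrt (N * d)%:R * C)) => u v u0 uv vt.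
  rewrite -!mulrA; apply: le_trans (hLl _ _) (mul_le_norm_mul _ (sqrtr_ge0 _) _).
  apply: state_dist_le => [|l k]; first by rewrite mulr_ge0 ?subr_ge0.
  exact: xC.
- exists (`|Lp| * (Num.sqrt (d + d)%:R * C)) => u v u0 uv vt.
  rewrite -!mulrA; apply: le_trans (hLp _ _ _ _) (mul_le_norm_mul _ (sqrtr_ge0 _) _).
  by apply: pair_dist_le => [|k|k]; rewrite ?mulr_ge0 ?subr_ge0 //; exact: xC.
Qed.

Lemma interaction_between t i j : 0 <= t ->
  let S := interaction_values lam phi (max_init_norm (x 0)) in
  [/\ 0 <= inf S, inf S <= lam i (x t) * phi i j (x t i) (x t j)
    & lam i (x t) * phi i j (x t i) (x t j) <= sup S].
Proof.
move=> t0 S; have St : S (lam i (x t) * phi i j (x t i) (x t j)).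
  by exists i, j, (x t); split => // k; exact: solution_in_ball.
have S_lb : lbound S 0 by move=> _ [i' [j' [y [_ ->]]]]; rewrite mulr_ge0 ?ltW.
split; first by apply: lb_le_inf S_lb; exists (lam i (x t) * phi i j (x t i) (x t j)).
  by apply: ge_inf St; exists 0.
apply: ub_le_sup St; apply: interaction_values_ubound; exact: bigmax_ge_id.
Qed.

End Model.

Lemma conn_arrow_scale {R : realType} (N : nat) (T c m : R)
    (M Mt : 'I_N -> 'I_N -> R -> R) t i j :
  0 < T -> 0 <= m ->
  (@lebesgue_measure R).-integrable `[t, t + T] (EFin \o M i j) ->
  (@lebesgue_measure R).-integrable `[t, t + T] (EFin \o Mt i j) ->
  (forall s, t <= s <= t + T -> m * M i j s <= Mt i j s) ->
  conn_arrow T c M t i j -> conn_arrow T (m * c) Mt t i j.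
Proof.
rewrite /conn_arrow => T0 m0 intM intMt MMt cM.
have mM_int : (@lebesgue_measure R).-integrable `[t, t + T] (EFin \o fun s => m * M i j s).
  by have := integrableZl _ m intM => /(_ (measurable_itv _)); apply: eq_integrable.
apply: le_trans (ler_wpM2l m0 cM) _; rewrite mulrCA -RintegralZl //.
apply: ler_wpM2l; first by rewrite invr_ge0 ltW.
by apply: le_Rintegral => // s; rewrite /= in_itv; exact: MMt.
Qed.

Theorem proposition2 (R : realType) (N d : nat) (hN : (2 <= N)%N) (hd : (1 <= d)%N)
  (M : 'I_N -> 'I_N -> R -> R)
  (lam : 'I_N -> state R N d -> R)
  (phi : 'I_N -> 'I_N -> 'rV[R]_d -> 'rV[R]_d -> R)
  (hMmeas : forall i j, measurable_fun `[0 : R, +oo[ (M i j))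
  (hMrange : forall i j t, 0 <= t -> 0 <= M i j t <= 1)
  (hlam_lip : forall i, exists L : R, forall y z : state R N d,
      `|lam i y - lam i z| <= L * state_dist y z)
  (hlam_pos : forall i y, 0 < lam i y)
  (hphi_lip : forall i j, exists L : R, forall a b a' b' : 'rV[R]_d,
      `|phi i j a b - phi i j a' b'| <= L * pair_dist a b a' b')
  (hphi_pos : forall i j a b, 0 < phi i j a b)
  (T mu : R) (hT : 0 < T) (hmu : 0 < mu)
  (x : R -> state R N d)
  (hx : caratheodory_solution
          (fun s (y : state R N d) i =>
             (lam i y / N%:R) *:
               \sum_(j < N) (M i j s * phi i j (y i) (y j)) *: (y j - y i)) x) :
  let r := max_init_norm (x 0) in
  let m_lo := inf (interaction_values lam phi r) in
  let m_hi := sup (interaction_values lam phi r) in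
  exists Mt : 'I_N -> 'I_N -> R -> R,
    (forall i j, measurable_fun `[0 : R, +oo[ (Mt i j)) /\
    (forall i j t, 0 <= t -> 0 <= Mt i j t <= m_hi) /\
    caratheodory_solution
      (fun s (y : state R N d) i =>
         N%:R^-1 *: \sum_(j < N) Mt i j s *: (y j - y i)) x /\
    (forall t, 0 <= t -> forall i j,
        conn_arrow T mu M t i j -> conn_arrow T (m_lo * mu) Mt t i j).
Proof.
move=> r m_lo m_hi.
pose I i j s := lam i (x s) * phi i j (x s i) (x s j).
have I_bounds i j t : 0 <= t -> [/\ 0 <= m_lo, m_lo <= I i j t & I i j t <= m_hi].
  exact: (interaction_between hMrange hlam_lip hlam_pos hphi_lip hphi_pos hx i j).
have I_meas i j := interaction_measurable hMrange hlam_lip hlam_pos hphi_lip hphi_pos hx i j.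
have Mt_range i j t : 0 <= t -> 0 <= M i j t * I i j t <= m_hi.
  move=> t0; have /andP[M0 M1] := hMrange i j t t0.
  have [_ _ Ihi] := I_bounds i j t t0; have I0 : 0 < I i j t by rewrite mulr_gt0.
  by apply/andP; split; nra.
exists (fun i j s => M i j s * I i j s); split; [|split; [|split]] => //.
- by move=> i j; exact: measurable_funM (hMmeas i j) (I_meas i j).
- apply: caratheodory_solution_eq hx => s i k.
  rewrite !row_lincomb_coord !mulr_sumr; apply: eq_bigr => j _; rewrite /I; ring.
- move=> t t0 i j; have [mlo0 _ _] := I_bounds i j t t0.
  apply: conn_arrow_scale => //.
  + apply: (integrable_window (C := 1) T t0 (hMmeas i j)) => s s0.
    by have /andP[M0 M1] := hMrange i j s s0; rewrite ger0_norm.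
  + apply: (integrable_window (C := m_hi) T t0 (measurable_funM (hMmeas i j) (I_meas i j))).
    by move=> s s0; have /andP[? ?] := Mt_range i j s s0; rewrite ger0_norm.
  + move=> s /andP[ts _]; have s0 := le_trans t0 ts.
    have /andP[M0 _] := hMrange i j s s0; have [_ Ilo _] := I_bounds i j s s0.
    nra.
Qed.
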